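(* For any first-order $\mathscr L$-theory $T$, the following are equivalent: (1) $T$ is model-complete; (2) $T^*$ is positively model-complete; (3) $T^*$ is geometrically complete.
   Context: $\mathscr L^*$ is $\mathscr L$ plus, for each relation symbol $R$ of $\mathscr L$, a new relation symbol $R^*$ of the same arity; $T^*$ (the atomic Morleyisation of $T$) is $T$ together with all axioms $\forall\bar x(\neg R(\bar x)\leftrightarrow R^*(\bar x))$. $T$ is model-complete if every embedding between models of $T$ is existentially closed (reflects existential sentences with parameters). A homomorphism preserves atomic sentences with parameters; it is an immersion if it reflects every positive existential (prenex existential, negation-free) sentence with parameters; a theory is positively model-complete if every homomorphism between its models is an immersion. A homomorphism $f:A\to B$ is geometrically closed if every sentence $\forall\bar y\,(\bigwedge\Phi(\bar a,\bar y)\to\psi(\bar a,\bar y))$ ($\Phi\cup\{\psi\}$ finite sets of atomic formulas, parameters from $A$) true in $A$ holds in $B$ of $f\bar a$; a theory is geometrically complete if every homomorphism between its models is geometrically closed. *)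

From Stdlib Require Import List.
From Stdlib Require Fin.
Import ListNotations.

Set Implicit Arguments.

Record Lang : Type := {
  Func : Type;
  farity : Func -> nat;
  Rel : Type;
  rarity : Rel -> nat
}.

Inductive term (L : Lang) : Type :=
| tvar : nat -> term L
| tapp : forall f : Func L, (Fin.t (farity L f) -> term L) -> term L.

Inductive formula (L : Lang) : Type :=
| fTrue : formula L
| fFalse : formula L
| fEq : term L -> term L -> formula L
| fRel : forall R : Rel L, (Fin.t (rarity L R) -> term L) -> formula L
| fNeg : formula L -> formula L
| fAnd : formula L -> formula L -> formula L
| fOr : formula L -> formula L -> formula L
| fImp : formula L -> formula L -> formula L
| fEx : formula L -> formula L
| fAll : formula L -> formula L.

Arguments tvar {L} _.
Arguments fTrue {L}.
Arguments fFalse {L}.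

Definition fIff {L} (p q : formula L) : formula L := fAnd (fImp p q) (fImp q p).

(** A theory: a set of formulas (each read as its universal closure). *)
Definition theory (L : Lang) := formula L -> Prop.

Record Structure (L : Lang) : Type := {
  dom :> Type;
  interp_f : forall f : Func L, (Fin.t (farity L f) -> dom) -> dom;
  interp_r : forall R : Rel L, (Fin.t (rarity L R) -> dom) -> Prop
}.

Definition scons {A : Type} (a : A) (e : nat -> A) (n : nat) : A :=
  match n with 0 => a | S m => e m end.

Fixpoint eval {L} (M : Structure L) (e : nat -> M) (t : term L) : M :=
  match t with
  | tvar n => e n
  | tapp f args => interp_f M f (fun i => eval M e (args i))
  end.

Fixpoint sat {L} (M : Structure L) (e : nat -> M) (p : formula L) : Prop :=
  match p with
  | fTrue => True
  | fFalse => False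
  | fEq t1 t2 => eval M e t1 = eval M e t2
  | fRel R args => interp_r M R (fun i => eval M e (args i))
  | fNeg q => ~ sat M e q
  | fAnd q r => sat M e q /\ sat M e r
  | fOr q r => sat M e q \/ sat M e r
  | fImp q r => sat M e q -> sat M e r
  | fEx q => exists a : M, sat M (scons a e) q
  | fAll q => forall a : M, sat M (scons a e) q
  end.

(** Models (first-order structures are nonempty). *)
Definition is_model {L} (T : theory L) (M : Structure L) : Prop :=
  inhabited (dom M) /\ forall p, T p -> forall e : nat -> M, sat M e p.

Fixpoint exs {L} (k : nat) (p : formula L) : formula L :=
  match k with 0 => p | S k' => fEx (exs k' p) end.
Fixpoint alls {L} (k : nat) (p : formula L) : formula L :=
  match k with 0 => p | S k' => fAll (alls k' p) end.

Definition bigand {L} (l : list (formula L)) : formula L :=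
  fold_right (@fAnd L) fTrue l.

Inductive atomic {L} : formula L -> Prop :=
| at_eq : forall t1 t2, atomic (fEq t1 t2)
| at_rel : forall R args, atomic (fRel R args).

Inductive qfree {L} : formula L -> Prop :=
| qf_true : qfree fTrue
| qf_false : qfree fFalse
| qf_eq : forall t1 t2, qfree (fEq t1 t2)
| qf_rel : forall R args, qfree (fRel R args)
| qf_neg : forall p, qfree p -> qfree (fNeg p)
| qf_and : forall p q, qfree p -> qfree q -> qfree (fAnd p q)
| qf_or : forall p q, qfree p -> qfree q -> qfree (fOr p q)
| qf_imp : forall p q, qfree p -> qfree q -> qfree (fImp p q).

Inductive posqf {L} : formula L -> Prop :=
| pq_true : posqf fTrue
| pq_false : posqf fFalse
| pq_eq : forall t1 t2, posqf (fEq t1 t2)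
| pq_rel : forall R args, posqf (fRel R args)
| pq_and : forall p q, posqf p -> posqf q -> posqf (fAnd p q)
| pq_or : forall p q, posqf p -> posqf q -> posqf (fOr p q).

(** Maps between structures. Parameters from A are given by an assignment
    e : nat -> A of the free variables; their images are h \o e. *)
Definition is_hom {L} (A B : Structure L) (h : A -> B) : Prop :=
  (forall f (a : Fin.t (farity L f) -> A),
      h (interp_f A f a) = interp_f B f (fun i => h (a i))) /\
  (forall R (a : Fin.t (rarity L R) -> A),
      interp_r A R a -> interp_r B R (fun i => h (a i))).

Definition is_embedding {L} (A B : Structure L) (h : A -> B) : Prop :=
  is_hom A B h /\
  (forall x y, h x = h y -> x = y) /\
  (forall R (a : Fin.t (rarity L R) -> A),
      interp_r B R (fun i => h (a i)) -> interp_r A R a).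

Definition ex_closed {L} (A B : Structure L) (h : A -> B) : Prop :=
  forall (k : nat) (p : formula L), qfree p ->
  forall e : nat -> A, sat B (fun n => h (e n)) (exs k p) -> sat A e (exs k p).

Definition is_immersion {L} (A B : Structure L) (h : A -> B) : Prop :=
  is_hom A B h /\
  forall (k : nat) (p : formula L), posqf p ->
  forall e : nat -> A, sat B (fun n => h (e n)) (exs k p) -> sat A e (exs k p).

Definition geom_closed {L} (A B : Structure L) (h : A -> B) : Prop :=
  is_hom A B h /\
  forall (k : nat) (Phi : list (formula L)) (psi : formula L),
  Forall atomic Phi -> atomic psi ->
  forall e : nat -> A,
    sat A e (alls k (fImp (bigand Phi) psi)) ->
    sat B (fun n => h (e n)) (alls k (fImp (bigand Phi) psi)).

Definition model_complete {L} (T : theory L) : Prop :=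
  forall (A B : Structure L), is_model T A -> is_model T B ->
  forall h : A -> B, is_embedding A B h -> ex_closed A B h.

Definition pos_model_complete {L} (T : theory L) : Prop :=
  forall (A B : Structure L), is_model T A -> is_model T B ->
  forall h : A -> B, is_hom A B h -> is_immersion A B h.

Definition geom_complete {L} (T : theory L) : Prop :=
  forall (A B : Structure L), is_model T A -> is_model T B ->
  forall h : A -> B, is_hom A B h -> geom_closed A B h.

(** Equality is treated as one of the relation
    symbols of L, so L* contains, besides R* for every relation symbol R,
    the symbol =* (written Neq) for the negation of equality. *)
Inductive MRel (L : Lang) : Type :=
| Orig : Rel L -> MRel L
| Star : Rel L -> MRel L
| Neq : MRel L.

Definition Lstar (L : Lang) : Lang := {|
  Func := Func L;
  farity := farity L;
  Rel := MRel L;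
  rarity := fun r => match r with
                     | Orig _ R => rarity L R
                     | Star _ R => rarity L R
                     | Neq _ => 2
                     end
|}.

Fixpoint tr_term {L} (t : term L) : term (Lstar L) :=
  match t with
  | tvar n => tvar n
  | tapp f args => @tapp (Lstar L) f (fun i => tr_term (args i))
  end.

Fixpoint tr_formula {L} (p : formula L) : formula (Lstar L) :=
  match p with
  | fTrue => fTrue
  | fFalse => fFalse
  | fEq t1 t2 => fEq (tr_term t1) (tr_term t2)
  | fRel R args => @fRel (Lstar L) (Orig L R) (fun i => tr_term (args i))
  | fNeg q => fNeg (tr_formula q)
  | fAnd q r => fAnd (tr_formula q) (tr_formula r)
  | fOr q r => fOr (tr_formula q) (tr_formula r)
  | fImp q r => fImp (tr_formula q) (tr_formula r)
  | fEx q => fEx (tr_formula q)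
  | fAll q => fAll (tr_formula q)
  end.

Definition fin_vars {L} (n : nat) : Fin.t n -> term L :=
  fun i => tvar (proj1_sig (Fin.to_nat i)).
Arguments fin_vars {L} n _.

Definition morley_ax {L} (R : Rel L) : formula (Lstar L) :=
  alls (rarity L R)
    (fIff (fNeg (@fRel (Lstar L) (Orig L R) (fin_vars (rarity L R))))
          (@fRel (Lstar L) (Star L R) (fin_vars (rarity L R)))).

Definition neq_ax (L : Lang) : formula (Lstar L) :=
  alls 2 (fIff (fNeg (fEq (tvar 0) (tvar 1)))
               (@fRel (Lstar L) (Neq L) (fin_vars 2))).

Definition Tstar {L} (T : theory L) : theory (Lstar L) :=
  fun p => (exists q, T q /\ p = tr_formula q)
        \/ (exists R : Rel L, p = morley_ax R)
        \/ p = neq_ax L.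

(* A model of T* is a model of T in which R* and =* name the complements of R and =, and a
   homomorphism between two such models is the same thing as an embedding of their L-reducts.
   Pushing negations onto atoms and replacing negated atoms by starred ones turns every
   quantifier-free L-formula into a negation-free L*-formula with the same meaning, and reading
   starred atoms back as negations goes the other way; this gives (1) <=> (2).
   Since every atomic L*-formula has an atomic complement modulo T*, a sequent Phi -> psi fails
   at a tuple exactly when the positive formula Phi /\ psi* holds there, and a conjunction
   a /\ Phi has no solution exactly when the sequent Phi -> a* holds everywhere.  So reflecting
   existential positive formulas (in disjunctive normal form) and preserving geometric sequents
   are the same property; this gives (2) <=> (3). *)

From Stdlib Require Import List Classical FunctionalExtensionality.
Import ListNotations.

Lemma alls_S (L : Lang) (n : nat) (p : formula L) : alls (S n) p = alls n (fAll p).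
Proof. induction n as [|n IH]; simpl; [reflexivity | now rewrite <- IH]. Qed.

Definition fin_pair {X : Type} (x y : X) : Fin.t 2 -> X :=
  fun i => match proj1_sig (Fin.to_nat i) with 0 => x | _ => y end.

(* [prepend n a e] puts the tuple [a] in front of [e]; [a Fin.F1] becomes variable 0. *)
Fixpoint prepend {X : Type} (n : nat) : (Fin.t n -> X) -> (nat -> X) -> nat -> X :=
  match n with
  | 0 => fun _ e => e
  | S n' => fun a e => scons (a Fin.F1) (prepend n' (fun j => a (Fin.FS j)) e)
  end.

Lemma prepend_to_nat {X : Type} {n : nat} (i : Fin.t n) :
  forall (a : Fin.t n -> X) e, prepend n a e (proj1_sig (Fin.to_nat i)) = a i.
Proof.
  induction i as [|n i IH]; intros a e; [reflexivity|].
  specialize (IH (fun j => a (Fin.FS j)) e); simpl in *.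
  destruct (Fin.to_nat i); exact IH.
Qed.

Lemma eval_fin_vars_prepend {L : Lang} {M : Structure L} (n : nat) (a : Fin.t n -> M) e :
  (fun i => eval M (prepend n a e) (fin_vars n i)) = a.
Proof. apply functional_extensionality; intro i; apply prepend_to_nat. Qed.

Lemma sat_alls_prepend {L : Lang} {M : Structure L} {n : nat} {p : formula L} {e : nat -> M} :
  sat M e (alls n p) -> forall a : Fin.t n -> M, sat M (prepend n a e) p.
Proof.
  revert p e; induction n as [|n IH]; intros p e H a; [exact H|].
  rewrite alls_S in H. exact (IH (fAll p) e H (fun j => a (Fin.FS j)) (a Fin.F1)).
Qed.

Lemma sat_alls_intro {L : Lang} {M : Structure L} (p : formula L) :
  (forall e, sat M e p) -> forall k e, sat M e (alls k p).
Proof. intros H k; induction k; simpl; auto. Qed.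

Lemma sat_exs_true {L : Lang} {M : Structure L} :
  inhabited M -> forall k e, sat M e (exs k (@fTrue L)).
Proof. intros [x] k; induction k; intros e; simpl; [exact I | exists x; apply IHk]. Qed.

Lemma sat_exs_iff_not_alls {L : Lang} {M : Structure L} (p q : formula L) :
  (forall e, sat M e q <-> ~ sat M e p) ->
  forall k e, sat M e (exs k q) <-> ~ sat M e (alls k p).
Proof.
  intros H k; induction k as [|k IH]; intros e; simpl; [apply H|].
  split.
  - intros [a Ha] Hall. exact (proj1 (IH _) Ha (Hall a)).
  - intros Hn. apply not_all_ex_not in Hn as [a Ha]. exists a. now apply IH.
Qed.

Lemma sat_bigand_app {L : Lang} {M : Structure L} e (c1 c2 : list (formula L)) :
  sat M e (bigand (c1 ++ c2)) <-> sat M e (bigand c1) /\ sat M e (bigand c2).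
Proof. induction c1 as [|p c1 IH]; simpl; [tauto | rewrite IH; tauto]. Qed.

Lemma bigand_posqf (L : Lang) (c : list (formula L)) : Forall atomic c -> posqf (bigand c).
Proof. induction 1 as [|p c Hp]; simpl; constructor; auto. destruct Hp; constructor. Qed.

Definition reduct {L : Lang} (M : Structure (Lstar L)) : Structure L := {|
  dom := dom M;
  interp_f := fun (f : Func L) (a : Fin.t (farity L f) -> dom M) => interp_f M (f : Func (Lstar L)) a;
  interp_r := fun (R : Rel L) (a : Fin.t (rarity L R) -> dom M) => interp_r M (Orig L R) a |}.

Definition expand {L : Lang} (M : Structure L) : Structure (Lstar L) := {|
  dom := dom M;
  interp_f := fun (f : Func (Lstar L)) (a : Fin.t (farity (Lstar L) f) -> dom M) => interp_f M (f : Func L) a;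
  interp_r := fun r => match r as r0 return (Fin.t (rarity (Lstar L) r0) -> dom M) -> Prop with
    | Orig _ R => fun a => interp_r M R a
    | Star _ R => fun a => ~ interp_r M R a
    | Neq _ => fun a => a Fin.F1 <> a (Fin.FS Fin.F1)
    end |}.

Definition morleyised {L : Lang} (M : Structure (Lstar L)) : Prop :=
  (forall R (a : Fin.t (rarity L R) -> M),
      interp_r M (Star L R) a <-> ~ interp_r M (Orig L R) a) /\
  (forall a : Fin.t 2 -> M, interp_r M (Neq L) a <-> a Fin.F1 <> a (Fin.FS Fin.F1)).

Lemma model_Tstar_morleyised {L : Lang} {T : theory L} {M : Structure (Lstar L)} :
  is_model (Tstar T) M -> morleyised M.
Proof.
  intros [[x] HM]; split.
  - intros R a.
    pose proof (sat_alls_prepend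
      (HM _ (or_intror (or_introl (ex_intro _ R eq_refl))) (fun _ => x)) a) as H.
    cbn [sat fIff] in H; rewrite !eval_fin_vars_prepend in H. tauto.
  - intros a.
    pose proof (sat_alls_prepend (HM _ (or_intror (or_intror eq_refl)) (fun _ => x)) a) as H.
    cbn [sat fIff] in H; rewrite !eval_fin_vars_prepend in H. tauto.
Qed.

Lemma expand_morleyised {L : Lang} (M : Structure L) : morleyised (expand M).
Proof. split; simpl; tauto. Qed.

Fixpoint untr_term {L : Lang} (t : term (Lstar L)) : term L :=
  match t with
  | tvar n => tvar n
  | tapp f args => @tapp L f (fun i => untr_term (args i))
  end.

Fixpoint untr {L : Lang} (p : formula (Lstar L)) : formula L :=
  match p with
  | fTrue => fTrue
  | fFalse => fFalse
  | fEq t1 t2 => fEq (untr_term t1) (untr_term t2)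
  | fRel r args =>
      (match r as r0 return (Fin.t (rarity (Lstar L) r0) -> term (Lstar L)) -> formula L with
       | Orig _ R => fun a => fRel R (fun i => untr_term (a i))
       | Star _ R => fun a => fNeg (fRel R (fun i => untr_term (a i)))
       | Neq _ => fun a => fNeg (fEq (untr_term (a Fin.F1)) (untr_term (a (Fin.FS Fin.F1))))
       end) args
  | fNeg q => fNeg (untr q)
  | fAnd q r => fAnd (untr q) (untr r)
  | fOr q r => fOr (untr q) (untr r)
  | fImp q r => fImp (untr q) (untr r)
  | fEx q => fEx (untr q)
  | fAll q => fAll (untr q)
  end.

Lemma untr_term_tr (L : Lang) : forall t : term L, untr_term (tr_term t) = t.
Proof.
  fix IH 1; intros [n|f args]; simpl; [reflexivity|].
  f_equal; apply functional_extensionality; intro i; apply IH.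
Qed.

Lemma untr_tr (L : Lang) (p : formula L) : untr (tr_formula p) = p.
Proof.
  induction p; simpl; f_equal; auto using untr_term_tr.
  apply functional_extensionality; intro i; apply untr_term_tr.
Qed.

Lemma untr_exs (L : Lang) (k : nat) (p : formula (Lstar L)) : untr (exs k p) = exs k (untr p).
Proof. induction k; simpl; congruence. Qed.

Lemma untr_qfree {L : Lang} {p : formula (Lstar L)} : posqf p -> qfree (untr p).
Proof. induction 1; simpl; try constructor; auto. destruct R; simpl; repeat constructor. Qed.

Lemma eval_untr {L : Lang} (M : Structure (Lstar L)) e :
  forall t, eval (reduct M) e (untr_term t) = eval M e t.
Proof.
  fix IH 1; intros [n|f args]; simpl; [reflexivity|].
  f_equal; apply functional_extensionality; intro i; apply IH.
Qed.

Lemma sat_untr {L : Lang} {M : Structure (Lstar L)} : morleyised M ->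
  forall p e, sat (reduct M) e (untr p) <-> sat M e p.
Proof.
  intros [HStar HNeq]; induction p as [| |t1 t2|r args| | | | | |]; intros e; simpl; try tauto.
  - now rewrite !eval_untr.
  - pose proof (functional_extensionality _ _ (fun i => eval_untr M e (args i))) as Hargs.
    destruct r; simpl in *; rewrite ?Hargs, ?HStar, ?HNeq, ?eval_untr; tauto.
  - now rewrite IHp.
  - now rewrite IHp1, IHp2.
  - now rewrite IHp1, IHp2.
  - now rewrite IHp1, IHp2.
  - split; intros [a Ha]; exists a; apply IHp; exact Ha.
  - split; intros H a; apply IHp; apply H.
Qed.

Lemma sat_tr_reduct {L : Lang} {M : Structure (Lstar L)} : morleyised M ->
  forall p e, sat M e (tr_formula p) <-> sat (reduct M) e p.
Proof. intros HM p e. now rewrite <- (sat_untr HM), untr_tr. Qed.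

Lemma sat_tr_expand {L : Lang} (M : Structure L) :
  forall p e, sat (expand M) e (tr_formula p) <-> sat M e p.
Proof. destruct M; exact (sat_tr_reduct (expand_morleyised _)). Qed.

Lemma model_reduct {L : Lang} {T : theory L} {M : Structure (Lstar L)} :
  is_model (Tstar T) M -> is_model T (reduct M).
Proof.
  intros HM; split; [exact (proj1 HM)|].
  intros q Hq e. apply sat_tr_reduct; [exact (model_Tstar_morleyised HM)|].
  apply (proj2 HM); left; eauto.
Qed.

Lemma model_expand {L : Lang} {T : theory L} {M : Structure L} :
  is_model T M -> is_model (Tstar T) (expand M).
Proof.
  intros [Hinh HM]; split; [exact Hinh|].
  intros p [[q [Hq ->]]|[[R ->]| ->]] e.
  - apply sat_tr_expand; auto.
  - apply sat_alls_intro; intros e'; simpl; tauto.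
  - simpl; tauto.
Qed.

Lemma hom_reduct_embedding {L : Lang} {A B : Structure (Lstar L)} {h : A -> B} :
  morleyised A -> morleyised B -> is_hom A B h -> is_embedding (reduct A) (reduct B) h.
Proof.
  intros [HStarA HNeqA] [HStarB HNeqB] [Hf Hr].
  split; [split|split].
  - intros f a; apply Hf.
  - intros R a; apply Hr.
  - intros x y Hxy; apply NNPP; intros Hne.
    assert (Hx : interp_r A (Neq L) (fin_pair x y)) by (apply HNeqA; exact Hne).
    apply Hr, HNeqB in Hx; contradiction.
  - intros R a HB; apply NNPP; intros HnA.
    assert (Ha : interp_r A (Star L R) a) by (apply HStarA; exact HnA).
    apply Hr, HStarB in Ha; contradiction.
Qed.

Lemma embedding_expand_hom {L : Lang} {A B : Structure L} {h : A -> B} :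
  is_embedding A B h -> is_hom (expand A) (expand B) h.
Proof.
  intros [[Hf Hr] [Hinj Hrefl]]; split; [intros f a; apply Hf|].
  intros [R|R|] a; simpl.
  - apply Hr.
  - intros HnA HB; apply HnA, Hrefl, HB.
  - intros Hne Heq; apply Hne, Hinj, Heq.
Qed.

Lemma reduct_ex_closed_immersion {L : Lang} (A B : Structure (Lstar L)) (h : A -> B) :
  morleyised A -> morleyised B -> is_hom A B h -> ex_closed (reduct A) (reduct B) h ->
  is_immersion A B h.
Proof.
  intros HA HB Hh Hex; split; [exact Hh|].
  intros k p Hp e HBs.
  apply (sat_untr HA); rewrite untr_exs.
  apply Hex; [exact (untr_qfree Hp)|].
  rewrite <- untr_exs; apply (sat_untr HB), HBs.
Qed.

(* [posnnf false p] is a negation-free [L*]-form of [~ p]: negated atoms become [R*] and [=*]. *)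
Fixpoint posnnf {L : Lang} (b : bool) (p : formula L) : formula (Lstar L) :=
  match p with
  | fTrue => if b then fTrue else fFalse
  | fFalse => if b then fFalse else fTrue
  | fEq t1 t2 => if b then fEq (tr_term t1) (tr_term t2)
                 else @fRel (Lstar L) (Neq L) (fin_pair (tr_term t1) (tr_term t2))
  | fRel R args => if b then @fRel (Lstar L) (Orig L R) (fun i => tr_term (args i))
                   else @fRel (Lstar L) (Star L R) (fun i => tr_term (args i))
  | fNeg q => posnnf (negb b) q
  | fAnd p q => if b then fAnd (posnnf true p) (posnnf true q) else fOr (posnnf false p) (posnnf false q)
  | fOr p q => if b then fOr (posnnf true p) (posnnf true q) else fAnd (posnnf false p) (posnnf false q)
  | fImp p q => if b then fOr (posnnf false p) (posnnf true q) else fAnd (posnnf true p) (posnnf false q)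
  | _ => fTrue
  end.

Lemma posnnf_posqf {L : Lang} {p : formula L} : qfree p -> forall b, posqf (posnnf b p).
Proof. induction 1; intros []; simpl; try constructor; auto. Qed.

Lemma eval_tr_expand {L : Lang} (M : Structure L) e :
  forall t, eval (expand M) e (tr_term t) = eval M e t.
Proof.
  fix IH 1; intros [n|f args]; simpl; [reflexivity|].
  f_equal; apply functional_extensionality; intro i; apply IH.
Qed.

Lemma sat_posnnf {L : Lang} (M : Structure L) {p : formula L} : qfree p ->
  forall b e, sat (expand M) e (posnnf b p) <-> (if b then sat M e p else ~ sat M e p).
Proof.
  induction 1 as [| |t1 t2|R args|p Hp IH|p q Hp IHp Hq IHq|p q Hp IHp Hq IHq|p q Hp IHp Hq IHq];
    intros b e; destruct b; simpl; unfold fin_pair; simpl.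
  all: try (pose proof (functional_extensionality _ _ (fun i => eval_tr_expand M e (args i)))
              as Hargs; rewrite Hargs).
  all: rewrite ?eval_tr_expand, ?IH, ?IHp, ?IHq; try tauto.
  all: destruct (classic (sat M e p)); try destruct (classic (sat M e q)); tauto.
Qed.

Lemma sat_exs_posnnf {L : Lang} (M : Structure L) {p : formula L} : qfree p ->
  forall k e, sat (expand M) e (exs k (posnnf true p)) <-> sat M e (exs k p).
Proof.
  intros Hp k; induction k as [|k IH]; intros e; simpl; [exact (sat_posnnf M Hp true e)|].
  split; intros [a Ha]; exists a; apply IH, Ha.
Qed.

Lemma expand_immersion_ex_closed {L : Lang} (A B : Structure L) (h : A -> B) :
  is_immersion (expand A) (expand B) h -> ex_closed A B h.
Proof.
  intros [_ Him] k p Hp e HBs.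
  apply (sat_exs_posnnf A Hp), Him; [exact (posnnf_posqf Hp true)|].
  apply (sat_exs_posnnf B Hp), HBs.
Qed.

Definition atom_compl {L : Lang} (p : formula (Lstar L)) : formula (Lstar L) :=
  match p with
  | fEq t1 t2 => @fRel (Lstar L) (Neq L) (fin_pair t1 t2)
  | fRel r args =>
      (match r as r0 return (Fin.t (rarity (Lstar L) r0) -> term (Lstar L)) -> formula (Lstar L) with
       | Orig _ R => fun a => @fRel (Lstar L) (Star L R) a
       | Star _ R => fun a => @fRel (Lstar L) (Orig L R) a
       | Neq _ => fun a => fEq (a Fin.F1) (a (Fin.FS Fin.F1))
       end) args
  | _ => fTrue
  end.

Lemma atom_compl_atomic {L : Lang} {p : formula (Lstar L)} : atomic p -> atomic (atom_compl p).
Proof. intros []; simpl; [constructor|]. destruct R; simpl; constructor. Qed.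

Lemma sat_atom_compl {L : Lang} {M : Structure (Lstar L)} : morleyised M ->
  forall p e, atomic p -> (sat M e (atom_compl p) <-> ~ sat M e p).
Proof.
  intros [HStar HNeq] p e []; simpl.
  - rewrite HNeq; unfold fin_pair; simpl; tauto.
  - destruct R as [R|R|]; simpl; rewrite ?HStar, ?HNeq.
    + tauto.
    + pose proof (classic (interp_r M (Orig L R) (fun i => eval M e (args i)))); tauto.
    + pose proof (classic (eval M e (args Fin.F1) = eval M e (args (Fin.FS Fin.F1)))); tauto.
Qed.

Fixpoint dnf {L : Lang} (p : formula L) : list (list (formula L)) :=
  match p with
  | fTrue => [[]]
  | fFalse => []
  | fAnd p q => flat_map (fun c1 => map (fun c2 => c1 ++ c2) (dnf q)) (dnf p)
  | fOr p q => dnf p ++ dnf q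
  | _ => [[p]]
  end.

Lemma dnf_atomic {L : Lang} {p : formula L} : posqf p -> forall c, In c (dnf p) -> Forall atomic c.
Proof.
  induction 1; simpl; intros c Hc.
  - destruct Hc as [<-|[]]; constructor.
  - destruct Hc.
  - destruct Hc as [<-|[]]; repeat constructor.
  - destruct Hc as [<-|[]]; repeat constructor.
  - apply in_flat_map in Hc as [c1 [H1 Hc]].
    apply in_map_iff in Hc as [c2 [<- H2]]. apply Forall_app; auto.
  - apply in_app_iff in Hc as [Hc|Hc]; auto.
Qed.

Lemma sat_dnf {L : Lang} (M : Structure L) {p : formula L} : posqf p ->
  forall e, sat M e p <-> exists c, In c (dnf p) /\ sat M e (bigand c).
Proof.
  induction 1 as [| |t1 t2|R args|p q _ IHp _ IHq|p q _ IHp _ IHq]; intros e; simpl.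
  - split; [intros _; exists []; simpl; auto | tauto].
  - split; [tauto | intros [c [[] _]]].
  - split; [intros H; exists [fEq t1 t2]; simpl; auto | intros [c [[<-|[]] Hc]]; apply Hc].
  - split; [intros H; exists [fRel R args]; simpl; auto | intros [c [[<-|[]] Hc]]; apply Hc].
  - rewrite IHp, IHq; split.
    + intros [[c1 [H1 Hs1]] [c2 [H2 Hs2]]]. exists (c1 ++ c2). split.
      * apply in_flat_map. exists c1. split; [exact H1|]. apply in_map, H2.
      * apply sat_bigand_app; auto.
    + intros [c [Hc Hs]]. apply in_flat_map in Hc as [c1 [H1 Hc]].
      apply in_map_iff in Hc as [c2 [<- H2]]. apply sat_bigand_app in Hs as [Hs1 Hs2].
      split; [exists c1 | exists c2]; auto.
  - rewrite IHp, IHq; setoid_rewrite in_app_iff; firstorder.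
Qed.

Lemma sat_exs_dnf {L : Lang} (M : Structure L) {p : formula L} : posqf p ->
  forall k e, sat M e (exs k p) <-> exists c, In c (dnf p) /\ sat M e (exs k (bigand c)).
Proof.
  intros Hp k; induction k as [|k IH]; intros e; simpl; [exact (sat_dnf M Hp e)|].
  split.
  - intros [a Ha]. apply IH in Ha as [c [Hc Hs]]. exists c. split; [exact Hc|]. exists a; exact Hs.
  - intros [c [Hc [a Ha]]]. exists a. apply IH. exists c; auto.
Qed.

(* A failure of the sequent [Phi -> psi] is witnessed by the positive formula [Phi /\ psi*]. *)
Lemma immersion_geom_closed {L : Lang} (A B : Structure (Lstar L)) (h : A -> B) :
  morleyised A -> morleyised B -> is_immersion A B h -> geom_closed A B h.
Proof.
  intros HA HB [Hh Him]; split; [exact Hh|].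
  intros k Phi psi HPhi Hpsi e HAs.
  set (witness := fAnd (bigand Phi) (atom_compl psi)).
  assert (Hcompl : forall (M : Structure (Lstar L)), morleyised M ->
            forall e', sat M e' witness <-> ~ sat M e' (fImp (bigand Phi) psi)).
  { intros M HM e'; simpl. rewrite (sat_atom_compl HM _ _ Hpsi).
    pose proof (classic (sat M e' (bigand Phi))); tauto. }
  apply NNPP; intros HBn.
  apply (sat_exs_iff_not_alls _ _ (Hcompl B HB)) in HBn.
  apply Him in HBn; [|constructor; [apply bigand_posqf, HPhi | destruct (atom_compl_atomic Hpsi); constructor]].
  exact (proj1 (sat_exs_iff_not_alls _ _ (Hcompl A HA) k e) HBn HAs).
Qed.

(* Dually, [exists (a /\ Phi)] fails exactly when the sequent [Phi -> a*] holds. *)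
Lemma geom_closed_reflects_conj {L : Lang} {A B : Structure (Lstar L)} {h : A -> B} :
  morleyised A -> morleyised B -> inhabited A -> geom_closed A B h ->
  forall c k e, Forall atomic c ->
  sat B (fun n => h (e n)) (exs k (bigand c)) -> sat A e (exs k (bigand c)).
Proof.
  intros HA HB Hinh [_ Hgc] [|a Phi] k e Hc HBs; [apply sat_exs_true, Hinh|].
  inversion Hc as [|? ? Ha HPhi]; subst.
  set (sequent := fImp (bigand Phi) (atom_compl a)).
  assert (Hcompl : forall (M : Structure (Lstar L)), morleyised M ->
            forall e', sat M e' (bigand (a :: Phi)) <-> ~ sat M e' sequent).
  { intros M HM e'; simpl. rewrite (sat_atom_compl HM _ _ Ha).
    pose proof (classic (sat M e' a)); tauto. }
  apply (sat_exs_iff_not_alls _ _ (Hcompl A HA)); intros HAs.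
  apply (Hgc k Phi (atom_compl a) HPhi (atom_compl_atomic Ha)) in HAs.
  exact (proj1 (sat_exs_iff_not_alls _ _ (Hcompl B HB) k _) HBs HAs).
Qed.

Lemma geom_closed_immersion {L : Lang} (A B : Structure (Lstar L)) (h : A -> B) :
  morleyised A -> morleyised B -> inhabited A -> geom_closed A B h -> is_immersion A B h.
Proof.
  intros HA HB Hinh Hgc; split; [exact (proj1 Hgc)|].
  intros k p Hp e HBs.
  apply (sat_exs_dnf B Hp) in HBs as [c [Hc HBc]].
  apply (sat_exs_dnf A Hp). exists c. split; [exact Hc|].
  exact (geom_closed_reflects_conj HA HB Hinh Hgc c k e (dnf_atomic Hp c Hc) HBc).
Qed.

Theorem corollary4p22 (L : Lang) (T : theory L) :
  (model_complete T <-> pos_model_complete (Tstar T)) /\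
  (pos_model_complete (Tstar T) <-> geom_complete (Tstar T)).
Proof.
  split; split.
  - intros Hmc A B HA HB h Hh.
    pose proof (model_Tstar_morleyised HA) as HmA.
    pose proof (model_Tstar_morleyised HB) as HmB.
    apply reduct_ex_closed_immersion; [exact HmA | exact HmB | exact Hh |].
    exact (Hmc _ _ (model_reduct HA) (model_reduct HB) h (hom_reduct_embedding HmA HmB Hh)).
  - intros Hpmc A B HA HB h Hh.
    apply expand_immersion_ex_closed.
    exact (Hpmc _ _ (model_expand HA) (model_expand HB) h (embedding_expand_hom Hh)).
  - intros Hpmc A B HA HB h Hh.
    apply immersion_geom_closed; [exact (model_Tstar_morleyised HA)
                                 | exact (model_Tstar_morleyised HB) | exact (Hpmc A B HA HB h Hh)].
  - intros Hgc A B HA HB h Hh.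
    apply geom_closed_immersion; [exact (model_Tstar_morleyised HA) | exact (model_Tstar_morleyised HB)
                                 | exact (proj1 HA) | exact (Hgc A B HA HB h Hh)].
Qed.
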